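(* Let $\mathbf P$ be a collection of quartiles and let $\mathbf D$ be a collection of quartiles such that the tiles $\{Q_3:Q\in\mathbf D\}$ are pairwise disjoint. Let $\mathbf P':=\{P\in\mathbf P: P_1\le Q_3\text{ for some }Q\in\mathbf D\}$. Then for every pair $P\in\mathbf P$, $Q\in\mathbf D$ with $P_1\cap Q_3\ne\emptyset$ we have $\omega_{Q_3}\subseteq\omega_{P_1}$ if and only if $P\in\mathbf P'$.
   Context: A tile is a rectangle $I\times\omega$ of area one with $I,\omega$ dyadic intervals. A quartile is $P=I_P\times\omega_P=[2^{-k}n,2^{-k}(n+1))\times[2^{k+2}l,2^{k+2}(l+1))$ ($k,n\in\mathbb Z$, $l\ge0$ integers) with sub-tiles $P_i:=I_P\times[2^k(4l+i-1),2^k(4l+i))$, $i=1,2,3$; $\omega_{P_i}$ denotes the frequency interval of $P_i$. For tiles $P,P'$ write $P'<P$ if $I_{P'}\subsetneq I_P$ and $\omega_P\subseteq\omega_{P'}$, and $P'\le P$ if $P'<P$ or $P'=P$. *)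

From mathcomp Require Import all_boot all_order all_algebra.
From mathcomp Require Import reals.
Set Implicit Arguments. Unset Strict Implicit. Unset Printing Implicit Defensive.
Import Order.TTheory GRing.Theory Num.Theory.
Local Open Scope ring_scope.

Section Tiles.
Variable R : realType.

Definition dint (j n : int) : R -> Prop :=
  fun x => n%:~R * (2%:R : R) ^ j <= x /\ x < (n + 1)%:~R * (2%:R : R) ^ j.

Definition incl (A B : R -> Prop) : Prop := forall x, A x -> B x.

End Tiles.

(* A tile I x omega of area one:
   I = [2^-k n, 2^-k (n+1)),  omega = [2^k m, 2^k (m+1)). *)
Record tile := Tile { t_k : int; t_n : int; t_m : int }.

Definition tI (R : realType) (t : tile) : R -> Prop := @dint R (- t_k t) (t_n t).
Definition tw (R : realType) (t : tile) : R -> Prop := @dint R (t_k t) (t_m t).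
Definition tile_set (R : realType) (t : tile) : R * R -> Prop :=
  fun p => @tI R t p.1 /\ @tw R t p.2.

Definition tile_lt (R : realType) (P' P : tile) : Prop :=
  incl (@tI R P') (@tI R P) /\ ~ incl (@tI R P) (@tI R P') /\
  incl (@tw R P) (@tw R P').
Definition tile_le (R : realType) (P' P : tile) : Prop :=
  @tile_lt R P' P \/ P' = P.

Record quartile := Quartile { q_k : int; q_n : int; q_l : nat }.

Definition qI (R : realType) (P : quartile) : R -> Prop := @dint R (- q_k P) (q_n P).
Definition qw (R : realType) (P : quartile) : R -> Prop := @dint R (q_k P + 2) (q_l P)%:Z.

Definition subtile (P : quartile) (i : nat) : tile :=
  Tile (q_k P) (q_n P) ((4 * q_l P + i)%:Z - 1).

(* Two dyadic intervals that meet are nested, the one of smaller scale inside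
   the other.  If omega_{Q_3} lies in omega_{P_1}, the frequency scale of Q is
   strictly smaller (at equal scales the frequency indices 4l+2 and 4l' would
   coincide, impossible mod 4), so I_P lies strictly inside I_Q and P_1 < Q_3.
   Conversely, let P_1 < Q'_3 with Q' in D.  The intervals omega_{P_1} and
   omega_{Q_3} meet, hence are nested; if omega_{P_1} were the smaller one, then
   for x in I_P the point (x, inf omega_{Q'_3}) would lie in both Q_3 and Q'_3,
   so disjointness forces Q_3 = Q'_3. *)
From mathcomp Require Import all_boot all_order all_algebra.
From mathcomp Require Import reals zify.
Set Implicit Arguments. Unset Strict Implicit.
Import Order.TTheory GRing.Theory Num.Theory.
Local Open Scope ring_scope.

Section DyadicIntervals.
Variable R : realType.

Let two_exprz_gt0 (j : int) : (0 : R) < 2%:R ^ j.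
Proof. by rewrite exprz_gt0. Qed.

Let ler_int_scale (u : R) (c d : int) : 0 < u -> (c%:~R * u <= d%:~R * u) = (c <= d).
Proof. by move=> u0; rewrite ler_pM2r // ler_int. Qed.

Let ltr_int_scale (u : R) (c d : int) : 0 < u -> (c%:~R * u < d%:~R * u) = (c < d).
Proof. by move=> u0; rewrite ltr_pM2r // ltr_int. Qed.

Lemma two_exprz_split (j j' : int) : j <= j' ->
  exists2 N : int, (2%:R : R) ^ j' = 2%:R ^ j * N%:~R & (j < j' -> 1 < N).
Proof.
move=> le_jj'; have [k ->] : exists k : nat, j' = j + k by exists `|j' - j|%N; lia.
exists (2 ^+ k); first by rewrite expfzDr ?pnatr_eq0 // -exprnP rmorphXn.
by move=> lt_jj'; rewrite exprn_egt1 //; lia.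
Qed.

Lemma dint_rescale (j j' n : int) (N : int) (x : R) :
  (2%:R : R) ^ j' = 2%:R ^ j * N%:~R ->
  dint j' n x <-> (n * N)%:~R * 2%:R ^ j <= x /\ x < ((n + 1) * N)%:~R * 2%:R ^ j.
Proof.
have scaled c : c%:~R * (2%:R ^ j * N%:~R) = (c * N)%:~R * (2%:R : R) ^ j.
  by rewrite intrM mulrA mulrAC.
by move=> E; rewrite /dint E !scaled.
Qed.

Lemma dint_left (j n : int) : dint j n (n%:~R * (2%:R : R) ^ j).
Proof. by split=> //; rewrite ltr_int_scale // ltzD1. Qed.

Lemma dint_sub (j n j' n' : int) (x : R) : j <= j' ->
  dint j n x -> dint j' n' x -> incl (@dint R j n) (dint j' n').
Proof.
move=> /two_exprz_split[N E _] [lo hi] /(dint_rescale _ _ E)[lo' hi'].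
have lb : n' * N < n + 1.
  by rewrite -(ltr_int_scale _ _ (two_exprz_gt0 j)); apply: le_lt_trans lo' hi.
have ub : n < (n' + 1) * N.
  by rewrite -(ltr_int_scale _ _ (two_exprz_gt0 j)); apply: le_lt_trans lo hi'.
move=> y [ylo yhi]; apply/(dint_rescale _ _ E); split.
- by apply: le_trans ylo; rewrite ler_int_scale //; lia.
- by apply: lt_le_trans yhi _; rewrite ler_int_scale //; lia.
Qed.

Lemma dint_sub_scale (j n j' n' : int) :
  incl (@dint R j n) (dint j' n') -> j <= j'.
Proof.
move=> sub; rewrite leNgt; apply/negP => lt_j'j.
have [N E /(_ lt_j'j) N_gt1] := two_exprz_split (ltW lt_j'j).
have pts c : n * N <= c < (n + 1) * N -> dint j n (c%:~R * (2%:R : R) ^ j').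
  by move=> /andP[lo hi]; apply/(dint_rescale _ _ E); rewrite ler_int_scale ?ltr_int_scale.
have [lo _] := sub _ (pts (n * N) ltac:(lia)).
have [_ hi] := sub _ (pts (n * N + 1) ltac:(lia)).
by move: lo hi; rewrite ler_int_scale ?ltr_int_scale //; lia.
Qed.

Lemma dint_sub_index (j n n' : int) : incl (@dint R j n) (dint j n') -> n = n'.
Proof.
move=> sub; have [] := sub _ (dint_left j n).
by rewrite ler_int_scale ?ltr_int_scale //; lia.
Qed.

Lemma dint_nested (j n j' n' : int) (x : R) : dint j n x -> dint j' n' x ->
  incl (@dint R j n) (dint j' n') \/ incl (@dint R j' n') (dint j n).
Proof.
move=> xI xI'; case: (lerP j j') => [le|/ltW le].
- by left; apply: dint_sub xI xI'.
- by right; apply: dint_sub xI' xI.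
Qed.
End DyadicIntervals.

Lemma tile_eq_dec (t u : tile) : {t = u} + {t <> u}.
Proof. by decide equality; apply: decP eqP. Qed.

Lemma subtile_neq (P Q : quartile) (i j : nat) :
  i != j %[mod 4] -> subtile P i <> subtile Q j.
Proof. by move=> ij [_ _]; lia. Qed.

Section Tiles.
Variable R : realType.

Lemma tile_lt_of_overlap (t u : tile) (x : R) :
  @tI R t x -> @tI R u x -> incl (@tw R u) (@tw R t) -> t_k u < t_k t ->
  @tile_lt R t u.
Proof.
move=> xt xu sw lt_ut; split; last split=> //.
- by apply: dint_sub xt xu; rewrite lerN2 ltW.
- by move/dint_sub_scale; rewrite lerN2 leNgt lt_ut.
Qed.

Lemma subtile_tw_sub_scale (P Q : quartile) (i j : nat) :
  incl (@tw R (subtile Q j)) (@tw R (subtile P i)) -> i != j %[mod 4] ->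
  q_k Q < q_k P.
Proof.
rewrite /tw /= => sw ij; rewrite lt_def (dint_sub_scale sw) andbT.
by apply/eqP => e; move: sw; rewrite e => /dint_sub_index; lia.
Qed.
End Tiles.

Theorem lemma6p1 (R : realType) (PP DD : quartile -> Prop) :
  (forall Q Q', DD Q -> DD Q' -> subtile Q 3 <> subtile Q' 3 ->
     forall p, ~ (@tile_set R (subtile Q 3) p /\ @tile_set R (subtile Q' 3) p)) ->
  let PP' := fun P => PP P /\ exists Q, DD Q /\ @tile_le R (subtile P 1) (subtile Q 3) in
  forall P Q, PP P -> DD Q ->
    (exists p, @tile_set R (subtile P 1) p /\ @tile_set R (subtile Q 3) p) ->
    (incl (@tw R (subtile Q 3)) (@tw R (subtile P 1)) <-> PP' P).
Proof.
move=> disjD PP' P Q PP_P DD_Q [[x xi] [[/= xIP xwP] [/= xIQ xwQ]]]; split.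
  move=> swQP; split=> //; exists Q; split=> //; left.
  exact: tile_lt_of_overlap xIP xIQ swQP (subtile_tw_sub_scale swQP isT).
move=> [_ [Q' [DD_Q' le_PQ']]].
have [sIPQ' [_ swQ'P]] : @tile_lt R (subtile P 1) (subtile Q' 3).
  by case: le_PQ' => // /(subtile_neq (isT : (1 != 3 %[mod 4])%N)).
case: (dint_nested xwQ xwP) => // swPQ.
suff -> : subtile Q 3 = subtile Q' 3 by [].
case: (tile_eq_dec (subtile Q 3) (subtile Q' 3)) => // neQQ'.
set xi' := (t_m (subtile Q' 3))%:~R * (2%:R : R) ^ t_k (subtile Q' 3).
have xi'Q' : @tw R (subtile Q' 3) xi' by apply: dint_left.
case: (disjD _ _ DD_Q DD_Q' neQQ' (x, xi')); split; split=> //=.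
- by apply/swPQ/swQ'P.
- exact: sIPQ'.
Qed.
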